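(* Let $n\ge 2$, and consider words in the free monoid $F_n$ on the letters $g_i,g_i^{-1},e_i$ ($1\le i\le n-1$). A move $u\leftrightarrow v$ means replacing a contiguous subword equal to $u$ by $v$ or vice versa. Consider the moves, for $\epsilon\in\{+1,-1\}$ and $i,j\in\{1,\dots,n-1\}$: (M6) $g_i^{\epsilon}g_j^{\epsilon}e_i\leftrightarrow e_je_i$ for $|i-j|=1$; (M7) $e_ig_j^{\epsilon}g_i^{\epsilon}\leftrightarrow e_ie_j$ for $|i-j|=1$; (M20) $e_i\leftrightarrow g_i^{\epsilon}e_i$; (M21) $e_i\leftrightarrow e_ig_i^{\epsilon}$. Then the following moves are realized by finite sequences of the moves (M6), (M7), (M20), (M21): (a) $g_i^{\epsilon}g_j^{\epsilon}e_i\leftrightarrow e_jg_i^{\delta}g_j^{\delta}$ for all $\epsilon,\delta\in\{+1,-1\}$ and $|i-j|=1$; (b) $e_i\leftrightarrow g_i^{k}e_i$ for all $k\in\mathbb Z$; (c) $e_i\leftrightarrow e_ig_i^{k}$ for all $k\in\mathbb Z$.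
   Context: $F_n$ is the free monoid generated by the symbols $g_i,g_i^{-1},e_i$ ($i=1,\dots,n-1$). For $k>0$, $g_i^k$ denotes the word $g_i\cdots g_i$ ($k$ letters), $g_i^{-k}$ denotes $g_i^{-1}\cdots g_i^{-1}$ ($k$ letters), and $g_i^0$ is the empty word. *)

From mathcomp Require Import all_boot all_order all_algebra.
From Stdlib Require Import Relations.
Set Implicit Arguments. Unset Strict Implicit. Unset Printing Implicit Defensive.

(* Letters of the free monoid F_n: g_i, g_i^{-1}, e_i, with index i : nat
   (meaningful for 1 <= i <= n-1). *)
Inductive letter : Type :=
| Gp of nat
| Gm of nat
| E  of nat.

Definition idx (x : letter) : nat :=
  match x with Gp i | Gm i | E i => i end.

Definition in_Fn (n : nat) (w : seq letter) : Prop :=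
  all (fun x => (1 <= idx x) && (idx x <= n - 1)) w.

Definition valid_idx (n i : nat) : Prop := (1 <= i)%N /\ (i <= n - 1)%N.

(* g_i^eps, eps = true for +1 and false for -1 *)
Definition gsign (i : nat) (eps : bool) : letter := if eps then Gp i else Gm i.

Definition gpow (i : nat) (k : int) : seq letter :=
  match k with
  | Posz m => nseq m (Gp i)
  | Negz m => nseq m.+1 (Gm i)
  end.

Definition adjacent (i j : nat) : Prop := i = j.+1 \/ j = i.+1.

Inductive basic_move (n : nat) : seq letter -> seq letter -> Prop :=
| M6 (eps : bool) (i j : nat) :
    valid_idx n i -> valid_idx n j -> adjacent i j ->
    basic_move n [:: gsign i eps; gsign j eps; E i] [:: E j; E i]
| M7 (eps : bool) (i j : nat) :
    valid_idx n i -> valid_idx n j -> adjacent i j ->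
    basic_move n [:: E i; gsign j eps; gsign i eps] [:: E i; E j]
| M20 (eps : bool) (i : nat) :
    valid_idx n i -> basic_move n [:: E i] [:: gsign i eps; E i]
| M21 (eps : bool) (i : nat) :
    valid_idx n i -> basic_move n [:: E i] [:: E i; gsign i eps].

Definition step (n : nat) (w w' : seq letter) : Prop :=
  exists a b u v, in_Fn n a /\ in_Fn n b /\
    (basic_move n u v \/ basic_move n v u) /\
    w = a ++ u ++ b /\ w' = a ++ v ++ b.

Definition reach (n : nat) : relation (seq letter) := clos_refl_trans _ (step n).

From mathcomp Require Import all_boot all_order all_algebra.
From Stdlib Require Import Relations.

Set Implicit Arguments.
Unset Strict Implicit.

(* (a): both sides rewrite to e_j e_i, the left one by (M6) with sign eps and
   the right one by (M7), read backwards, with sign delta.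
   (b), (c): for k = +-m, insert m letters g_i^(+-1) next to e_i, one (M20)
   or (M21) move at a time. *)

Section ContextReach.

Variable n : nat.

Definition ctx_reach (u v : seq letter) : Prop :=
  forall a b, in_Fn n a -> in_Fn n b -> reach n (a ++ u ++ b) (a ++ v ++ b).

Lemma in_Fn_cat p q : in_Fn n p -> in_Fn n q -> in_Fn n (p ++ q).
Proof. by rewrite /in_Fn all_cat => -> ->. Qed.

Lemma in_Fn_gsign i eps : valid_idx n i -> in_Fn n [:: gsign i eps].
Proof. by case=> i_ge1 i_le; case: eps; rewrite /in_Fn /= i_ge1 i_le. Qed.

Lemma step_sym w w' : step n w w' -> step n w' w.
Proof.
case=> a [b [u [v [Ha [Hb [uv [-> ->]]]]]]].
by exists a, b, v, u; do !split => //; case: uv; auto.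
Qed.

Lemma reach_sym w w' : reach n w w' -> reach n w' w.
Proof.
elim=> [x y xy | x | x y z _ yx _ zy].
- exact/rt_step/step_sym.
- exact: rt_refl.
- exact: rt_trans zy yx.
Qed.

Lemma ctx_reach_refl u : ctx_reach u u.
Proof. by move=> a b _ _; apply: rt_refl. Qed.

Lemma ctx_reach_sym u v : ctx_reach u v -> ctx_reach v u.
Proof. by move=> uv a b Ha Hb; apply/reach_sym/uv. Qed.

Lemma ctx_reach_trans u v w : ctx_reach u v -> ctx_reach v w -> ctx_reach u w.
Proof. by move=> uv vw a b Ha Hb; apply: rt_trans (uv a b Ha Hb) (vw a b Ha Hb). Qed.

Lemma ctx_reach_cat p q u v : in_Fn n p -> in_Fn n q -> ctx_reach u v ->
  ctx_reach (p ++ u ++ q) (p ++ v ++ q).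
Proof.
move=> Hp Hq uv a b Ha Hb.
have reassoc w : a ++ (p ++ w ++ q) ++ b = (a ++ p) ++ w ++ (q ++ b).
  by rewrite !catA.
by rewrite !reassoc; apply: uv; apply: in_Fn_cat.
Qed.

Lemma ctx_reach_move u v : basic_move n u v -> ctx_reach u v.
Proof. by move=> uv a b Ha Hb; apply: rt_step; exists a, b, u, v; auto. Qed.

Lemma ctx_reach_reach2 u v : ctx_reach u v ->
  forall a b, in_Fn n a -> in_Fn n b ->
    reach n (a ++ u ++ b) (a ++ v ++ b) /\ reach n (a ++ v ++ b) (a ++ u ++ b).
Proof. by move=> uv a b Ha Hb; split; [apply: uv | apply: ctx_reach_sym]. Qed.

Lemma ctx_reach_gge_egg (eps delta : bool) i j :
  valid_idx n i -> valid_idx n j -> adjacent i j ->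
  ctx_reach [:: gsign i eps; gsign j eps; E i] [:: E j; gsign i delta; gsign j delta].
Proof.
move=> Hi Hj ij; have ji : adjacent j i by case: ij; [right | left].
apply: ctx_reach_trans (ctx_reach_move (M6 eps Hi Hj ij)) _.
exact/ctx_reach_sym/ctx_reach_move/(M7 delta Hj Hi ji).
Qed.

Lemma ctx_reach_nseq_e i eps m : valid_idx n i ->
  ctx_reach [:: E i] (nseq m (gsign i eps) ++ [:: E i]).
Proof.
move=> Hi; elim: m => [|m IHm]; first exact: ctx_reach_refl.
apply: ctx_reach_trans (ctx_reach_move (M20 eps Hi)) _.
have := ctx_reach_cat (in_Fn_gsign eps Hi) (isT : in_Fn n [::]) IHm.
by rewrite !cats0.
Qed.

Lemma ctx_reach_e_nseq i eps m : valid_idx n i ->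
  ctx_reach [:: E i] ([:: E i] ++ nseq m (gsign i eps)).
Proof.
move=> Hi; elim: m => [|m IHm]; first by rewrite cats0; apply: ctx_reach_refl.
apply: ctx_reach_trans (ctx_reach_move (M21 eps Hi)) _.
have := ctx_reach_cat (isT : in_Fn n [::]) (in_Fn_gsign eps Hi) IHm.
by rewrite -addn1 nseqD catA; apply.
Qed.

End ContextReach.

Lemma gpowE i k : gpow i k = nseq `|k|%N (gsign i (0 <= k)%R).
Proof. by case: k. Qed.

Theorem lemma5p4 (n : nat) (hn : (2 <= n)%N) :
  (* (a) *)
  (forall (eps delta : bool) (i j : nat),
     valid_idx n i -> valid_idx n j -> adjacent i j ->
     forall a b, in_Fn n a -> in_Fn n b ->
       reach n (a ++ [:: gsign i eps; gsign j eps; E i] ++ b)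
               (a ++ [:: E j; gsign i delta; gsign j delta] ++ b) /\
       reach n (a ++ [:: E j; gsign i delta; gsign j delta] ++ b)
               (a ++ [:: gsign i eps; gsign j eps; E i] ++ b)) /\
  (* (b) *)
  (forall (i : nat) (k : int), valid_idx n i ->
     forall a b, in_Fn n a -> in_Fn n b ->
       reach n (a ++ [:: E i] ++ b) (a ++ (gpow i k ++ [:: E i]) ++ b) /\
       reach n (a ++ (gpow i k ++ [:: E i]) ++ b) (a ++ [:: E i] ++ b)) /\
  (* (c) *)
  (forall (i : nat) (k : int), valid_idx n i ->
     forall a b, in_Fn n a -> in_Fn n b ->
       reach n (a ++ [:: E i] ++ b) (a ++ ([:: E i] ++ gpow i k) ++ b) /\
       reach n (a ++ ([:: E i] ++ gpow i k) ++ b) (a ++ [:: E i] ++ b)).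
Proof.
split; [|split].
- move=> eps delta i j Hi Hj ij.
  exact/ctx_reach_reach2/(ctx_reach_gge_egg eps delta Hi Hj ij).
- move=> i k Hi; rewrite gpowE.
  exact/ctx_reach_reach2/ctx_reach_nseq_e.
- move=> i k Hi; rewrite gpowE.
  exact/ctx_reach_reach2/ctx_reach_e_nseq.
Qed.
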